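(* Let $\mathcal{C}$ be a binary linear $[n,k,d]$ code with $d>3$, and let $\ell$ be an integer with $3\le\ell\le d$. Then $$\rho_{\ell}(\mathcal{C})\;\le\;\binom{n-k}{1}+\binom{n-k}{2}+\cdots+\binom{n-k}{\ell-2}.$$
   Context: For a binary matrix with columns indexed by $\{0,\ldots,n-1\}$, a row resolves a nonempty column set $I$ if its restriction to $I$ has Hamming weight exactly one; $I$ is a stopping set if no row resolves it; the stopping distance is the minimum size of a stopping set. A (possibly redundant) parity-check matrix of $\mathcal{C}$ is a binary matrix whose row space equals $\mathcal{C}^\perp$; $\rho_\ell(\mathcal{C})$ is the smallest number of rows of such a matrix with stopping distance at least $\ell$. *)

From HB Require Import structures.
From mathcomp Require Import all_boot all_order all_algebra.
Set Implicit Arguments. Unset Strict Implicit. Unset Printing Implicit Defensive.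
Import GRing.Theory.
Local Open Scope ring_scope.

(* A binary linear code of length n is the row space of a matrix G. *)
Definition wt n (v : 'rV['F_2]_n) : nat := #|[set j : 'I_n | v 0 j != 0]|.

Definition code_dim m n (G : 'M['F_2]_(m, n)) : nat := \rank G.

Definition min_dist m n (G : 'M['F_2]_(m, n)) (d : nat) : Prop :=
  (exists c : 'rV['F_2]_n, [/\ (c <= G)%MS, c != 0 & wt c = d]) /\
  (forall c : 'rV['F_2]_n, (c <= G)%MS -> c != 0 -> (d <= wt c)%N).

Definition dual_code m n (G : 'M['F_2]_(m, n)) : 'M['F_2]_n := kermx G^T.

(* H is a (possibly redundant) parity-check matrix of the code: row space = C^perp. *)
Definition parity_check m n r (G : 'M['F_2]_(m, n)) (H : 'M['F_2]_(r, n)) : Prop :=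
  (H == dual_code G)%MS.

Definition resolves r n (H : 'M['F_2]_(r, n)) (i : 'I_r) (I : {set 'I_n}) : bool :=
  #|[set j in I | H i j != 0]| == 1%N.

Definition stopping_set r n (H : 'M['F_2]_(r, n)) (I : {set 'I_n}) : bool :=
  (I != set0) && [forall i, ~~ resolves H i I].

(* "stopping distance of H is at least l": every stopping set has size >= l
   (vacuous when there are no stopping sets, i.e. stopping distance = infinity). *)
Definition stopping_distance_ge r n (H : 'M['F_2]_(r, n)) (l : nat) : Prop :=
  forall I : {set 'I_n}, stopping_set H I -> (l <= #|I|)%N.

(* rho_l(C) <= N : some parity-check matrix of C with at most N rows has
   stopping distance at least l (rho_l is the minimum such number of rows). *)
Definition rho_le m n (G : 'M['F_2]_(m, n)) (l N : nat) : Prop :=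
  exists r (H : 'M['F_2]_(r, n)),
    [/\ parity_check G H, stopping_distance_ge H l & (r <= N)%N].

From HB Require Import structures.
From mathcomp Require Import all_boot all_order all_algebra zify.
Set Implicit Arguments. Unset Strict Implicit. Unset Printing Implicit Defensive.
Import GRing.Theory.

(* Let H0 be a basis of the dual code, with r = n - k rows, and L = l - 2.
   We take as parity-check matrix the matrix H whose rows are all sums of
   between 1 and L rows of H0; it has the same row space as H0 and at most
   C(r,1) + ... + C(r,L) rows.  To see that every nonempty set I of fewer
   than l columns is resolved by some row of H:
   - since |I| < d, the columns of H0 indexed by I are linearly independent
     (a dependency would be a nonzero codeword supported inside I), i.e. the
     restriction M of H0 to I has full column rank t = |I|;
   - a minimal-weight combination x of rows of M equal to a unit vector
     involves linearly independent rows, so it has weight at most t; and if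
     t >= 2 one of the unit vectors is reached with at most t - 1 rows;
   - as t <= l - 1, some row x *m H0 of H then has exactly one nonzero entry
     on I, i.e. it resolves I. *)

Local Open Scope ring_scope.

Lemma F2_cases (a : 'F_2) : a = 0 \/ a = 1.
Proof. by case: a => [[|[|]]] //= lt_a; [left|right]; apply/val_inj. Qed.

Lemma F2_neq0 (a : 'F_2) : a != 0 -> a = 1.
Proof. by case: (F2_cases a) => ->. Qed.

Lemma F2_add11 : (1 + 1 : 'F_2) = 0.
Proof. exact/val_inj. Qed.

Definition supp p (x : 'rV['F_2]_p) : {set 'I_p} := [set i | x 0 i != 0].
Definition indicator p (S : {set 'I_p}) : 'rV['F_2]_p := \row_i (i \in S)%:R.

Lemma wtE p (x : 'rV['F_2]_p) : wt x = #|supp x|.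
Proof. by []. Qed.

Lemma indicator_supp p (x : 'rV['F_2]_p) : indicator (supp x) = x.
Proof.
apply/rowP => i; rewrite !mxE inE.
by case: (F2_cases (x 0 i)) => ->; rewrite ?eqxx // oner_eq0.
Qed.

Lemma supp_eq0 p (x : 'rV['F_2]_p) : (supp x == set0) = (x == 0).
Proof.
apply/eqP/eqP => [supp0|->]; last by apply/setP => i; rewrite !inE mxE eqxx.
apply/rowP => i; rewrite mxE.
by have := in_set0 i; rewrite -supp0 inE => /negbFE/eqP.
Qed.

Lemma wt_gt0 p (x : 'rV['F_2]_p) : x != 0 -> (0 < wt x)%N.
Proof. by rewrite wtE card_gt0 supp_eq0. Qed.

Lemma delta_neq0 (F : fieldType) t (k : 'I_t) : delta_mx 0 k != 0 :> 'rV[F]_t.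
Proof. by apply/negP => /eqP/rowP/(_ k); rewrite !mxE !eqxx => /eqP; rewrite oner_eq0. Qed.

Lemma left_kernel_nz (F : fieldType) m n (A : 'M[F]_(m, n)) :
  ~~ row_free A -> exists2 z : 'rV_m, z != 0 & z *m A = 0.
Proof.
rewrite -kermx_eq0 => /rowV0Pn[z zK nz_z].
by exists z => //; apply/eqP; rewrite -sub_kermx.
Qed.

(* Restriction to a set of coordinates I: v *m restr I lists the entries of v
   on I (in the order of enum I), and c *m (restr I)^T extends a vector on I
   by zero. *)

Definition restr (F : fieldType) p (I : {set 'I_p}) : 'M[F]_(p, #|I|) :=
  \matrix_(j, k) (j == enum_val k)%:R.

Section Restriction.
Variables (F : fieldType) (p : nat) (I : {set 'I_p}).

Lemma restrE (v : 'rV[F]_p) k : (v *m restr F I) 0 k = v 0 (enum_val k).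
Proof.
rewrite mxE (bigD1 (enum_val k)) //= big1 ?addr0; first by rewrite mxE eqxx mulr1.
by move=> j /negbTE nkj; rewrite mxE nkj mulr0.
Qed.

Lemma extend_out (c : 'rV[F]_#|I|) j : j \notin I -> (c *m (restr F I)^T) 0 j = 0.
Proof.
move=> jI; rewrite mxE big1 // => k _; rewrite !mxE.
by case: eqP => [jk|]; [move: jI; rewrite jk enum_valP | rewrite mulr0].
Qed.

Lemma extendK (c : 'rV[F]_#|I|) : c *m (restr F I)^T *m restr F I = c.
Proof.
apply/rowP => k; rewrite restrE mxE (bigD1 k) //= big1 ?addr0.
  by rewrite !mxE eqxx mulr1.
move=> k' nk'k; rewrite !mxE.
by case: eqP => [/enum_val_inj k'k|]; [rewrite k'k eqxx in nk'k | rewrite mulr0].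
Qed.

Lemma extend_eq0 (c : 'rV[F]_#|I|) : (c *m (restr F I)^T == 0) = (c == 0).
Proof.
apply/eqP/eqP => [c0|->]; last by rewrite mul0mx.
by rewrite -(extendK c) c0 mul0mx.
Qed.

End Restriction.

Lemma supp_extend p (I : {set 'I_p}) (c : 'rV['F_2]_#|I|) :
  supp (c *m (restr _ I)^T) \subset I.
Proof.
apply/subsetP => j; rewrite inE; apply: contraR => jI.
by rewrite extend_out ?eqxx.
Qed.

Lemma dual_dual m n (G : 'M['F_2]_(m, n)) r (H : 'M_(r, n)) :
  parity_check G H -> forall v : 'rV_n, v *m H^T = 0 -> (v <= G)%MS.
Proof.
rewrite /parity_check /dual_code => /andP[_ KH] v vH; set K := kermx G^T.
have GK : (G <= kermx K^T)%MS.
  by rewrite sub_kermx -{1}(trmxK G) -trmx_mul mulmx_ker trmx0.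
have rkK : \rank (kermx K^T) = \rank G.
  by rewrite mxrank_ker mxrank_tr mxrank_ker mxrank_tr subKn // rank_leq_col.
have KG : (kermx K^T <= G)%MS by rewrite -(mxrank_leqif_sup GK).2 rkK eqxx.
apply: submx_trans KG; rewrite sub_kermx.
by have [Y] := submxP KH; rewrite -/K => ->; rewrite trmx_mul mulmxA vH mul0mx.
Qed.

(* Columns of a parity-check matrix indexed by fewer than d positions are
   linearly independent, d being a lower bound on the weight of nonzero
   codewords: otherwise a dependency yields a codeword supported in I. *)
Lemma parity_check_restr_full m n (G : 'M['F_2]_(m, n)) d r (H : 'M_(r, n))
    (I : {set 'I_n}) :
  parity_check G H ->
  (forall c : 'rV_n, (c <= G)%MS -> c != 0 -> (d <= wt c)%N) ->
  (#|I| < d)%N -> row_full (H *m restr _ I).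
Proof.
move=> pcH min_wt ltId; apply: contraT => not_full.
have /left_kernel_nz[c nz_c cM] : ~~ row_free (H *m restr _ I)^T.
  by rewrite /row_free mxrank_tr.
set v := c *m (restr _ I)^T.
have vG : (v <= G)%MS by apply: (dual_dual pcH); rewrite -mulmxA -trmx_mul.
have nz_v : v != 0 by rewrite extend_eq0.
have := leq_trans (min_wt _ vG nz_v) (subset_leq_card (supp_extend c)).
by rewrite leqNgt ltId.
Qed.

Section MinimalCombination.
Variables (r t : nat) (M : 'M['F_2]_(r, t)).

Lemma min_weight_preimage (y : 'rV_t) : (y <= M)%MS ->
  exists2 x : 'rV_r, x *m M = y &
    forall x', x' *m M = x *m M -> (wt x <= wt x')%N.
Proof.
move=> /submxP[x1 e1].
have P1 : x1 *m M == y by rewrite e1.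
case: (@arg_minnP _ x1 (fun x => x *m M == y) (@wt r) P1) => x /eqP xM x_min.
by exists x => // x' x'M; apply: x_min; rewrite x'M xM.
Qed.

(* The rows used by a minimal-weight combination are linearly independent:
   a dependency u among them would give the lighter combination x + u. *)
Lemma min_weight_free (x : 'rV_r) :
  (forall x', x' *m M = x *m M -> (wt x <= wt x')%N) ->
  forall u : 'rV_r, u != 0 -> supp u \subset supp x -> u *m M != 0.
Proof.
move=> x_min u nz_u ux; apply/negP => /eqP uM.
have := x_min (x + u); rewrite mulmxDl uM addr0 => /(_ erefl).
rewrite !wtE; apply/negP; rewrite -ltnNge; apply: proper_card.
have /set0Pn[i ui] : supp u != set0 by rewrite supp_eq0.
have xi : x 0 i != 0 by have := subsetP ux i ui; rewrite inE.
rewrite inE in ui.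
apply/properP; split.
  apply/subsetP => j; rewrite !inE mxE; apply: contraR => /negbNE/eqP xj.
  have : j \notin supp u.
    by apply: contraL ux => ju; apply/subsetPn; exists j; rewrite // inE xj eqxx.
  by rewrite inE xj add0r negbK.
exists i; first by rewrite inE.
by rewrite inE mxE (F2_neq0 xi) (F2_neq0 ui) F2_add11 eqxx.
Qed.

Lemma free_rows_bound (S : {set 'I_r}) :
  (forall u : 'rV_r, u != 0 -> supp u \subset S -> u *m M != 0) ->
  (#|S| <= t)%N /\
  (#|S| = t -> forall y : 'rV_t, exists2 u : 'rV_r, supp u \subset S & u *m M = y).
Proof.
move=> S_free; set X := (restr _ S)^T *m M.
have rkX : \rank X = #|S|.
  apply/eqP; rewrite -/(row_free X); apply: contraT => /left_kernel_nz[z nz_z zX].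
  have nz_ext : z *m (restr _ S)^T != 0 by rewrite extend_eq0.
  by have := S_free _ nz_ext (supp_extend z); rewrite -mulmxA zX eqxx.
split=> [|St y]; first by rewrite -rkX rank_leq_col.
have /submxP[z ->] : (y <= X)%MS by apply: submx_full; rewrite /row_full rkX St.
by exists (z *m (restr _ S)^T); rewrite ?supp_extend ?mulmxA.
Qed.

(* A minimal combination x
   reaching a unit vector uses at most t rows; if it uses exactly t >= 2,
   these rows span everything and a second unit vector is reached by a
   proper subset of them. *)
Lemma unit_combination : row_full M -> (0 < t)%N ->
  exists x : 'rV_r, [/\ x != 0, (wt x <= maxn 1 t.-1)%N &
    exists k, x *m M = delta_mx 0 k].
Proof.
move=> fullM t_gt0; set k0 : 'I_t := Ordinal t_gt0.
have [x xM x_min] := min_weight_preimage (submx_full (delta_mx 0 k0) fullM).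
have nz_x : x != 0.
  by apply: contraNneq (delta_neq0 'F_2 k0) => x0; rewrite -xM x0 mul0mx.
have [wt_le_t span] := free_rows_bound (min_weight_free x_min).
case: (leqP (wt x) (maxn 1 t.-1)) => [|big_x]; first by exists x; split=> //; exists k0.
have wt_t : #|supp x| = t by apply/eqP; rewrite eqn_leq wt_le_t -wtE; move: big_x; lia.
have t_gt1 : (1 < t)%N by move: big_x; rewrite wtE wt_t; lia.
set k1 : 'I_t := Ordinal t_gt1.
have [u ux uM] := span wt_t (delta_mx 0 k1).
have u_neq_x : u != x.
  apply/eqP => ux_eq; move: uM; rewrite ux_eq xM => /rowP/(_ k1).
  by rewrite !mxE !eqxx /= => /eqP; rewrite eq_sym oner_eq0.
exists u; split; last by exists k1.
- by apply: contraNneq (delta_neq0 'F_2 k1) => u0; rewrite -uM u0 mul0mx.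
- have : (wt u < t)%N.
    rewrite wtE -wt_t; apply: proper_card; rewrite properEneq ux andbT.
    by apply: contra u_neq_x => /eqP e; rewrite -(indicator_supp u) e indicator_supp.
  lia.
Qed.

End MinimalCombination.

Lemma unit_restr_resolves r n (H : 'M['F_2]_(r, n)) (I : {set 'I_n}) (x : 'rV_r) k :
  x *m (H *m restr _ I) = delta_mx 0 k ->
  #|[set j in I | (x *m H) 0 j != 0]| = 1%N.
Proof.
move=> xk; transitivity #|[set enum_val k]|; last exact: cards1.
apply: eq_card => j; rewrite !inE; case: (boolP (j \in I)) => jI /=.
  rewrite -(enum_rankK_in jI jI) -restrE -mulmxA xk mxE (inj_eq enum_val_inj) eq_sym.
  by case: (_ == k); rewrite ?oner_eq0 ?eqxx.
by apply/esym/negP => /eqP jk; move: jI; rewrite jk enum_valP.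
Qed.

Definition small_sets r L := [set S : {set 'I_r} | (0 < #|S| <= L)%N].

Lemma card_small_sets r L :
  #|small_sets r L| = (\sum_(1 <= i < L.+1) 'C(r, i))%N.
Proof.
elim: L => [|L IH].
  by rewrite big_geq //; apply/eqP; rewrite cards_eq0; apply/eqP/setP => S;
    rewrite !inE; case: #|S|.
rewrite big_nat_recr //= -IH.
have -> : 'C(r, L.+1) = #|[set S : {set 'I_r} | #|S| == L.+1]| by rewrite card_draws card_ord.
rewrite -cardsUI.
have -> : small_sets r L :&: [set S : {set 'I_r} | #|S| == L.+1] = set0.
  by apply/setP => S; rewrite !inE; apply/negbTE; lia.
rewrite cards0 addn0; apply: eq_card => S; rewrite !inE.
by rewrite (leq_eqVlt #|S| L.+1) ltnS; case: eqP => [->|]; rewrite ?andbT ?orbF ?orbT.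
Qed.

Definition low_weight_sums r n L (H0 : 'M['F_2]_(r, n)) : 'M['F_2]_(#|small_sets r L|, n) :=
  \matrix_i (indicator (enum_val i) *m H0).

Section LowWeightSums.
Variables (r n L : nat) (H0 : 'M['F_2]_(r, n)).

Lemma low_weight_sums_row (x : 'rV_r) : x != 0 -> (wt x <= L)%N ->
  exists i, row i (low_weight_sums L H0) = x *m H0.
Proof.
move=> nz_x wt_x; have Sx : supp x \in small_sets r L.
  by rewrite inE -wtE wt_gt0.
by exists (enum_rank_in Sx (supp x)); rewrite rowK enum_rankK_in // indicator_supp.
Qed.

Lemma low_weight_sums_eqmx : (0 < L)%N -> (low_weight_sums L H0 == H0)%MS.
Proof.
move=> L_gt0; apply/andP; split; apply/row_subP => i; first by rewrite rowK submxMl.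
pose e : 'rV['F_2]_r := delta_mx 0 i.
have wt_e : (wt e <= L)%N.
  rewrite wtE (_ : supp e = [set i]) ?cards1 //; apply/setP => j.
  by rewrite !inE mxE eqxx /=; case: (j =P i); rewrite ?oner_eq0 ?eqxx.
have [i' rowi'] := low_weight_sums_row (delta_neq0 'F_2 i) wt_e.
by rewrite rowE -rowi' row_sub.
Qed.

End LowWeightSums.

Theorem theorem7 (n m : nat) (G : 'M['F_2]_(m, n)) (d l : nat) :
  min_dist G d -> (3 < d)%N -> (3 <= l <= d)%N ->
  rho_le G l (\sum_(1 <= i < l.-1) 'C(n - code_dim G, i))%N.
Proof.
move=> [_ min_wt] _ /andP[l_ge3 l_le_d].
set H0 := row_base (dual_code G).
have pcH0 : parity_check G H0 by apply/eqmxP; apply: eq_row_base.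
set H := low_weight_sums l.-2 H0.
exists #|small_sets (\rank (dual_code G)) l.-2|, H; split.
- have /eqmxP HH0 : (H == H0)%MS by apply: low_weight_sums_eqmx; lia.
  by apply/eqmxP; apply: eqmx_trans HH0 _; apply/eqmxP.
- move=> I /andP[nz_I /forallP unresolved]; rewrite leqNgt; apply/negP => I_lt_l.
  have fullM := parity_check_restr_full pcH0 min_wt (leq_trans I_lt_l l_le_d).
  have I_gt0 : (0 < #|I|)%N by rewrite card_gt0.
  have [x [nz_x wt_x [k xk]]] := unit_combination fullM I_gt0.
  have [i rowi] : exists i, row i H = x *m H0.
    by apply: low_weight_sums_row => //; apply: leq_trans wt_x _; lia.
  apply: (negP (unresolved i)); apply/eqP; apply: etrans (unit_restr_resolves xk).
  by apply: eq_card => j; rewrite -rowi !in_set [row _ _ _ _]mxE.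
- rewrite (_ : l.-1 = l.-2.+1); last by lia.
  by rewrite -card_small_sets /code_dim mxrank_ker mxrank_tr.
Qed.
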